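(* Let $p$ be a prime and $n$ a positive integer, let $T_n(\mathbf{Q}_p)$ be the ring of upper-triangular $n\times n$ matrices over $\mathbf{Q}_p$, and for $A=\{a_{j,k}\}\in T_n(\mathbf{Q}_p)$ put $$N(A)=\max_{1\le j<k\le n}|a_{j,k}|_p^{1/(k-j)}.$$ For $r\in\mathbf{Q}_p$ let $\delta_r(A)$ be the matrix whose $(j,k)$ entry is $r^{k-j}a_{j,k}$ for $j<k$, $a_{j,j}$ for $j=k$, and $0$ for $j>k$. Then $N(A+A')\le\max(N(A),N(A'))$ and $N(\delta_r(A))=|r|_pN(A)$ for all $A,A'\in T_n(\mathbf{Q}_p)$, $r\in\mathbf{Q}_p$; and if $A,A'\in T_n(\mathbf{Q}_p)$ have all their diagonal entries in $\mathbf{Z}_p$, then $N(AA')\le\max(N(A),N(A'))$.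
   Context: $|\cdot|_p$ is the $p$-adic absolute value on $\mathbf{Q}_p$, and $\mathbf{Z}_p=\{x\in\mathbf{Q}_p:|x|_p\le1\}$. For $n=1$ the maximum over an empty set is taken to be $0$. *)

From HB Require Import structures.
From mathcomp Require Import all_boot all_order all_algebra.
From mathcomp Require Import all_classical all_reals all_analysis.
Set Implicit Arguments. Unset Strict Implicit. Unset Printing Implicit Defensive.
Import Order.TTheory GRing.Theory Num.Theory.
Local Open Scope ring_scope.

(* Characterization of (Q_p, |.|_p) up to isometric isomorphism:
   K is a field of characteristic 0 with a real-valued absolute value
   [abs] that is multiplicative, definite, ultrametric, normalized by
   |p| = 1/p, in which Q is dense and which is complete.  By Ostrowski
   the restriction of [abs] to Q is the p-adic absolute value, so K is
   the completion Q_p of Q with respect to |.|_p. *)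
Definition is_Qp (R : realType) (p : nat) (K : fieldType) (abs : K -> R) : Prop :=
  [/\ [pchar K] =i pred0,
      [/\ (forall x, 0 <= abs x) /\ (forall x, abs x = 0 <-> x = 0),
      (forall x y, abs (x * y) = abs x * abs y),
      (forall x y, abs (x + y) <= Num.max (abs x) (abs y))
        & abs (p%:R) = (p%:R)^-1],
      (forall (x : K) (e : R), 0 < e -> exists q : rat, abs (x - ratr q) < e)
    & (forall u : nat -> K,
         (forall e : R, 0 < e -> exists N, forall m n,
             (N <= m)%N -> (N <= n)%N -> abs (u m - u n) < e) ->
         exists l, forall e : R, 0 < e -> exists N, forall n,
             (N <= n)%N -> abs (u n - l) < e)].

Definition upper_tri (K : fieldType) (n : nat) (A : 'M[K]_n) : Prop :=
  forall j k : 'I_n, (k < j)%N -> A j k = 0.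

Definition Nnorm (R : realType) (K : fieldType) (abs : K -> R) (n : nat)
    (A : 'M[K]_n) : R :=
  \big[Num.max/0]_(j < n) \big[Num.max/0]_(k < n | (j < k)%N)
     powR (abs (A j k)) ((k - j)%N%:R^-1).

Definition delta (K : fieldType) (n : nat) (r : K) (A : 'M[K]_n) : 'M[K]_n :=
  \matrix_(j, k) (if (j < k)%N then r ^+ (k - j) * A j k
                  else if j == k then A j j else 0).

From HB Require Import structures.
From mathcomp Require Import all_boot all_order all_algebra.
From mathcomp Require Import all_classical all_reals all_analysis.
From mathcomp Require Import zify.
Import Order.TTheory GRing.Theory Num.Theory.
Local Open Scope ring_scope.

(* Since |a_{jk}|^{1/(k-j)} <= M iff |a_{jk}| <= M^(k-j), the statement
   N(A) <= M says that every entry a_{jk} above the diagonal has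
   |a_{jk}| <= M^(k-j).  All three claims are then entrywise: the
   ultrametric inequality gives the sum; delta_r scales a_{jk} by r^(k-j);
   and in (AA')_{jk} = sum_{j<=l<=k} a_{jl} a'_{lk} each term is bounded by
   M^(l-j) M^(k-l) = M^(k-j), the diagonal factors being bounded by
   1 = M^0. *)

Lemma powR_invn_expr {R : realType} {x : R} {m : nat} :
  (0 < m)%N -> 0 <= x -> powR (x ^+ m) (m%:R^-1) = x.
Proof.
move=> m_gt0 x_ge0; rewrite -powR_mulrn // -powRrM mulfV ?powRr1 //.
by rewrite pnatr_eq0 -lt0n.
Qed.

Lemma expr_powR_invn {R : realType} {x : R} {m : nat} :
  (0 < m)%N -> 0 <= x -> powR x (m%:R^-1) ^+ m = x.
Proof.
move=> m_gt0 x_ge0; rewrite -powR_mulrn ?powR_ge0 // -powRrM mulVf ?powRr1 //.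
by rewrite pnatr_eq0 -lt0n.
Qed.

Section UltrametricAbsolute.
Variables (R : realType) (K : fieldType) (abs : K -> R).
Hypothesis abs_ge0 : forall x, 0 <= abs x.
Hypothesis abs_eq0 : forall x, abs x = 0 <-> x = 0.
Hypothesis absM : forall x y, abs (x * y) = abs x * abs y.
Hypothesis abs_ultra : forall x y, abs (x + y) <= Num.max (abs x) (abs y).

Lemma abs0 : abs 0 = 0.
Proof. exact/abs_eq0. Qed.

Lemma abs1 : abs 1 = 1.
Proof.
have abs1_neq0 : abs 1 != 0 by apply/eqP => /abs_eq0/eqP; rewrite oner_eq0.
by apply: (mulfI abs1_neq0); rewrite -absM !mulr1.
Qed.

Lemma absX x m : abs (x ^+ m) = abs x ^+ m.
Proof. by elim: m => [|m IHm]; rewrite ?abs1 // !exprS absM IHm. Qed.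

Lemma abs_sum_le (I : Type) (r : seq I) (P : pred I) (F : I -> K) (c : R) :
  0 <= c -> (forall i, P i -> abs (F i) <= c) ->
  abs (\sum_(i <- r | P i) F i) <= c.
Proof.
move=> c_ge0 leFc; elim/big_rec: _ => [|i x Pi IHx]; first by rewrite abs0.
by apply: le_trans (abs_ultra _ _) _; rewrite ge_max leFc.
Qed.

Variable n : nat.
Implicit Types A B : 'M[K]_n.

Lemma Nnorm_ge0 A : 0 <= Nnorm abs A.
Proof.
by rewrite /Nnorm; elim/big_rec: _ => // j x _ x_ge0; rewrite le_max x_ge0 orbT.
Qed.

Lemma Nnorm_le_entries {A} {M : R} : 0 <= M ->
  Nnorm abs A <= M <->
  (forall j k : 'I_n, (j < k)%N -> abs (A j k) <= M ^+ (k - j)).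
Proof.
move=> M_ge0; split=> [leNM j k jk | leAM].
- have kj_gt0 : (0 < k - j)%N by rewrite subn_gt0.
  rewrite -(expr_powR_invn kj_gt0 (abs_ge0 _)).
  apply: lerXn2r; rewrite ?nnegrE ?powR_ge0 //.
  apply: le_trans leNM; rewrite /Nnorm; apply: le_trans (le_bigmax _ _ j).
  exact: (le_bigmax_cond _ (fun k => powR (abs (A j k)) ((k - j)%N%:R^-1)) jk).
- apply: bigmax_le => // j _; apply: bigmax_le => // k jk.
  have kj_gt0 : (0 < k - j)%N by rewrite subn_gt0.
  rewrite -(powR_invn_expr kj_gt0 M_ge0).
  by apply: ge0_ler_powR; rewrite ?nnegrE ?invr_ge0 ?ler0n ?exprn_ge0 ?leAM.
Qed.

Lemma Nnorm_diag_entries {A} {M : R} : 0 <= M -> Nnorm abs A <= M ->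
  (forall i, abs (A i i) <= 1) ->
  forall j k : 'I_n, (j <= k)%N -> abs (A j k) <= M ^+ (k - j).
Proof.
move=> M_ge0 /(Nnorm_le_entries M_ge0) leAM le_diag j k.
rewrite leq_eqVlt => /orP[/eqP/val_inj <- | /leAM //].
by rewrite subnn expr0.
Qed.

Lemma NnormD A B : Nnorm abs (A + B) <= Num.max (Nnorm abs A) (Nnorm abs B).
Proof.
set M := Num.max _ _; have M_ge0 : 0 <= M by rewrite le_max Nnorm_ge0.
have /(Nnorm_le_entries M_ge0) leAM : Nnorm abs A <= M by rewrite le_max lexx.
have /(Nnorm_le_entries M_ge0) leBM : Nnorm abs B <= M.
  by rewrite le_max lexx orbT.
apply/(Nnorm_le_entries M_ge0) => j k jk; rewrite mxE.
by apply: le_trans (abs_ultra _ _) _; rewrite ge_max leAM ?leBM.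
Qed.

Lemma Nnorm_delta A r : Nnorm abs (delta r A) = abs r * Nnorm abs A.
Proof.
have max_pMr x y : abs r * Num.max x y = Num.max (abs r * x) (abs r * y).
  exact: maxr_pMr.
rewrite /Nnorm (big_morph _ max_pMr (mulr0 _)); apply: eq_bigr => j _.
rewrite (big_morph _ max_pMr (mulr0 _)); apply: eq_bigr => k jk.
rewrite mxE jk absM absX powRM ?exprn_ge0 //.
by rewrite powR_invn_expr ?subn_gt0.
Qed.

Lemma NnormM A B : upper_tri A -> upper_tri B ->
  (forall i, abs (A i i) <= 1) -> (forall i, abs (B i i) <= 1) ->
  Nnorm abs (A *m B) <= Num.max (Nnorm abs A) (Nnorm abs B).
Proof.
move=> triA triB diagA diagB.
set M := Num.max _ _; have M_ge0 : 0 <= M by rewrite le_max Nnorm_ge0.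
have leAM : Nnorm abs A <= M by rewrite le_max lexx.
have leBM : Nnorm abs B <= M by rewrite le_max lexx orbT.
apply/(Nnorm_le_entries M_ge0) => j k jk; rewrite mxE.
apply: abs_sum_le => [|l _]; first by rewrite exprn_ge0.
have [lj | jl] := ltnP l j; first by rewrite triA // mul0r abs0 exprn_ge0.
have [kl | lk] := ltnP k l; first by rewrite triB // mulr0 abs0 exprn_ge0.
have -> : (k - j = (l - j) + (k - l))%N by lia.
rewrite absM exprD.
by apply: ler_pM; [exact: abs_ge0 | exact: abs_ge0
  | exact: (Nnorm_diag_entries M_ge0 leAM diagA)
  | exact: (Nnorm_diag_entries M_ge0 leBM diagB)].
Qed.

End UltrametricAbsolute.

Theorem mainTheorem4 (R : realType) (p : nat) (K : fieldType) (abs : K -> R)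
    (n : nat) :
  prime p -> (0 < n)%N -> is_Qp p abs ->
  [/\ (forall A A' : 'M[K]_n, upper_tri A -> upper_tri A' ->
         Nnorm abs (A + A') <= Num.max (Nnorm abs A) (Nnorm abs A')),
      (forall (A : 'M[K]_n) (r : K), upper_tri A ->
         Nnorm abs (delta r A) = abs r * Nnorm abs A)
    & (forall A A' : 'M[K]_n, upper_tri A -> upper_tri A' ->
         (forall i, abs (A i i) <= 1) -> (forall i, abs (A' i i) <= 1) ->
         Nnorm abs (A *m A') <= Num.max (Nnorm abs A) (Nnorm abs A'))].
Proof.
move=> _ _ [_ [[abs_ge0 abs_eq0] absM abs_ultra _] _ _].
split=> [A A' _ _ | A r _ | A A'].
- exact: NnormD.
- exact: Nnorm_delta.
- exact: NnormM.
Qed.
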